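(* Let $f,g\colon[0,2\pi)\times[0,2\pi)\to\mathbb{R}$ be given by $f(\theta_1,\theta_2)=\sin\theta_1+\sin(\theta_2-\theta_1)-\sin\theta_2$ and $g(\theta_1,\theta_2)=\cos\theta_1+\cos(\theta_2-\theta_1)+\cos\theta_2$. Then: (i) $f(\theta_1,\theta_2)\in[-\tfrac{3\sqrt3}{2},\tfrac{3\sqrt3}{2}]$ for all $\theta_1,\theta_2\in[0,2\pi)$, and $f(\theta_1,\theta_2)\in\{-\tfrac{3\sqrt3}{2},\tfrac{3\sqrt3}{2}\}$ if and only if $g(\theta_1,\theta_2)=-\tfrac32$; (ii) $f(\theta_1,\theta_1)=f(\theta_1,0)=f(0,\theta_2)=0$ for all $\theta_1,\theta_2\in[0,2\pi)$; moreover, for every $\theta_2\in(0,2\pi)$, $f(\cdot,\theta_2)>0$ on $(0,\theta_2)$ and $f(\cdot,\theta_2)<0$ on $(\theta_2,2\pi)$. *)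

From Stdlib Require Export Reals.
Open Scope R_scope.

Definition fF (t1 t2 : R) : R := sin t1 + sin (t2 - t1) - sin t2.
Definition gG (t1 t2 : R) : R := cos t1 + cos (t2 - t1) + cos t2.

Definition in_dom (t : R) : Prop := 0 <= t < 2 * PI.

(** Put [t2 = 2 S] and [t1 = S + D].  Then [fF t1 t2 = 2 sin S (cos D - cos S)]
    and [gG t1 t2 = 2 cos S (cos D + cos S) - 1].  With [k = |cos S|] one has
    [(cos D - cos S)^2 <= (1 + k)^2], so [fF^2 <= 4 (1 - k^2) (1 + k)^2 <= 27/4],
    the last step being tight only at [k = 1/2]; tracing the equality cases shows
    that [fF^2 = 27/4] exactly when [cos S (cos D + cos S) = -1/4], i.e. when
    [gG = -3/2].  For the sign of [fF], the sum-to-product formula turns the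
    half-angle form into [fF t1 t2 = 4 sin (t1/2) sin (t2/2) sin ((t2 - t1)/2)]. *)
From Stdlib Require Import Reals Lra.
Open Scope R_scope.

Lemma Rsqr_le_between (x M : R) : 0 <= M -> x² <= M² -> - M <= x <= M.
Proof.
  intros HM Hx.
  split; [apply Rsqr_neg_pos_le_0 | apply Rsqr_incr_0_var]; assumption.
Qed.

Lemma Rsqr_eq_opp_or_eq (x M : R) : x² = M² <-> x = - M \/ x = M.
Proof.
  split.
  - intro Hx. destruct (Rsqr_eq x M Hx); [right | left]; assumption.
  - intros [-> | ->]; [rewrite <- Rsqr_neg |]; reflexivity.
Qed.

Lemma Rsqr_three_sqrt3_div2 : (3 * sqrt 3 / 2)² = 27/4.
Proof.
  rewrite Rsqr_div', Rsqr_mult, Rsqr_sqrt by lra.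
  unfold Rsqr. field.
Qed.

Lemma sqr_sin_mul_cos_sub_le_gap (s c d : R) :
  s² + c² = 1 -> -1 <= d <= 1 ->
  (s * (d - c))² + (Rabs c - 1/2)² * ((Rabs c)² + 3 * Rabs c + 11/4) <= 27/16.
Proof.
  intros Hsc Hd.
  assert (Hs : s² = 1 - (Rabs c)²) by (rewrite <- Rsqr_abs; lra).
  assert (Hdc : (d - c)² <= (1 + Rabs c)²).
  { unfold Rsqr.
    destruct (Rcase_abs c); [rewrite Rabs_left | rewrite Rabs_right]; nra. }
  rewrite Rsqr_mult, Hs.
  assert (Hk : 0 <= 1 - (Rabs c)²).
  { rewrite <- Hs. apply Rle_0_sqr. }
  apply Rmult_le_compat_l with (r := 1 - (Rabs c)²) in Hdc; [|exact Hk].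
  (* [27/16 - (1 - k^2) (1 + k)^2 = (k - 1/2)^2 (k^2 + 3 k + 11/4)] *)
  unfold Rsqr in *.
  nra.
Qed.

Lemma sqr_sin_mul_cos_sub_le (s c d : R) :
  s² + c² = 1 -> -1 <= d <= 1 -> (s * (d - c))² <= 27/16.
Proof.
  intros Hsc Hd.
  pose proof (sqr_sin_mul_cos_sub_le_gap s c d Hsc Hd) as Hgap.
  pose proof (Rabs_pos c).
  assert (0 <= (Rabs c - 1/2)² * ((Rabs c)² + 3 * Rabs c + 11/4)).
  { apply Rmult_le_pos; [apply Rle_0_sqr | unfold Rsqr; nra]. }
  lra.
Qed.

Lemma sqr_sin_mul_cos_sub_eq (s c d : R) :
  s² + c² = 1 -> -1 <= d <= 1 ->
  ((s * (d - c))² = 27/16 <-> c * (d + c) = - (1/4)).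
Proof.
  intros Hsc Hd.
  split.
  - intro E.
    pose proof (sqr_sin_mul_cos_sub_le_gap s c d Hsc Hd) as Hgap.
    pose proof (Rabs_pos c).
    assert (Hk : Rabs c = 1/2).
    { assert (Hq : 0 < (Rabs c)² + 3 * Rabs c + 11/4) by (unfold Rsqr; nra).
      assert (Hz : (Rabs c - 1/2)² = 0).
      { pose proof (Rle_0_sqr (Rabs c - 1/2)). nra. }
      apply Rsqr_eq_0 in Hz. lra. }
    assert (Hc : c² = 1/4) by (rewrite Rsqr_abs, Hk; unfold Rsqr; lra).
    assert (Hcd : - (1/2) <= c * d <= 1/2) by (unfold Rsqr in Hc; nra).
    unfold Rsqr in *.
    nra.
  - intro E.
    assert (Hsum : (c + d / 2)² + (1 - d * d) / 4 = 0) by (unfold Rsqr; nra).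
    pose proof (Rle_0_sqr (c + d / 2)).
    assert (Hd2 : d * d = 1) by nra.
    assert (Hc : c = - d / 2).
    { assert (Hz : (c + d / 2)² = 0) by lra.
      apply Rsqr_eq_0 in Hz. lra. }
    subst c.
    unfold Rsqr in *.
    nra.
Qed.

Lemma fF_half_angle (t1 t2 : R) :
  fF t1 t2 = 2 * sin (t2 / 2) * (cos (t1 - t2 / 2) - cos (t2 / 2)).
Proof.
  set (S := t2 / 2). set (D := t1 - S).
  replace t1 with (S + D) by (unfold D; ring).
  replace t2 with (2 * S) by (unfold S; field).
  unfold fF.
  replace (2 * S - (S + D)) with (S - D) by ring.
  rewrite sin_2a, sin_plus, sin_minus.
  ring.
Qed.

Lemma gG_half_angle (t1 t2 : R) :
  gG t1 t2 = 2 * cos (t2 / 2) * (cos (t1 - t2 / 2) + cos (t2 / 2)) - 1.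
Proof.
  set (S := t2 / 2). set (D := t1 - S).
  replace t1 with (S + D) by (unfold D; ring).
  replace t2 with (2 * S) by (unfold S; field).
  unfold gG.
  replace (2 * S - (S + D)) with (S - D) by ring.
  rewrite cos_2a_sin, cos_plus, cos_minus.
  pose proof (sin2_cos2 S) as HS; unfold Rsqr in HS.
  nra.
Qed.

Lemma fF_prod (t1 t2 : R) :
  fF t1 t2 = 4 * sin (t1 / 2) * sin (t2 / 2) * sin ((t2 - t1) / 2).
Proof.
  rewrite fF_half_angle, form2.
  replace ((t1 - t2 / 2 - t2 / 2) / 2) with (- ((t2 - t1) / 2)) by field.
  replace ((t1 - t2 / 2 + t2 / 2) / 2) with (t1 / 2) by field.
  rewrite sin_neg.
  ring.
Qed.

Lemma fF_sqr_le (t1 t2 : R) : (fF t1 t2)² <= 27/4.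
Proof.
  rewrite fF_half_angle.
  pose proof (sqr_sin_mul_cos_sub_le (sin (t2 / 2)) (cos (t2 / 2)) (cos (t1 - t2 / 2))
                (sin2_cos2 _) (COS_bound _)).
  unfold Rsqr in *.
  nra.
Qed.

Lemma fF_sqr_eq (t1 t2 : R) : (fF t1 t2)² = 27/4 <-> gG t1 t2 = - (3/2).
Proof.
  rewrite fF_half_angle, gG_half_angle.
  pose proof (sqr_sin_mul_cos_sub_eq (sin (t2 / 2)) (cos (t2 / 2)) (cos (t1 - t2 / 2))
                (sin2_cos2 _) (COS_bound _)) as Heq.
  set (s := sin (t2 / 2)) in *. set (c := cos (t2 / 2)) in *.
  set (d := cos (t1 - t2 / 2)) in *.
  unfold Rsqr in *.
  split; intro E.
  - assert (c * (d + c) = - (1/4)) by (apply Heq; nra). lra.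
  - assert (s * (d - c) * (s * (d - c)) = 27/16) by (apply Heq; lra). nra.
Qed.

Lemma fF_diag (t : R) : fF t t = 0.
Proof. unfold fF. rewrite Rminus_diag, sin_0. ring. Qed.

Lemma fF_t0 (t : R) : fF t 0 = 0.
Proof. unfold fF. rewrite Rminus_0_l, sin_neg, sin_0. ring. Qed.

Lemma fF_0t (t : R) : fF 0 t = 0.
Proof. unfold fF. rewrite Rminus_0_r, sin_0. ring. Qed.

Lemma fF_gt0 (t1 t2 : R) : 0 < t1 < t2 -> t2 < 2 * PI -> 0 < fF t1 t2.
Proof.
  intros Ht Ht2.
  rewrite fF_prod.
  assert (0 < sin (t1 / 2)) by (apply sin_gt_0; lra).
  assert (0 < sin (t2 / 2)) by (apply sin_gt_0; lra).
  assert (0 < sin ((t2 - t1) / 2)) by (apply sin_gt_0; lra).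
  repeat apply Rmult_lt_0_compat; lra.
Qed.

Lemma fF_lt0 (t1 t2 : R) : 0 < t2 < t1 -> t1 < 2 * PI -> fF t1 t2 < 0.
Proof.
  intros Ht Ht1.
  rewrite fF_prod.
  replace ((t2 - t1) / 2) with (- ((t1 - t2) / 2)) by field.
  rewrite sin_neg.
  assert (0 < sin (t1 / 2)) by (apply sin_gt_0; lra).
  assert (0 < sin (t2 / 2)) by (apply sin_gt_0; lra).
  assert (0 < sin ((t1 - t2) / 2)) by (apply sin_gt_0; lra).
  assert (0 < 4 * sin (t1 / 2) * sin (t2 / 2) * sin ((t1 - t2) / 2))
    by (repeat apply Rmult_lt_0_compat; lra).
  lra.
Qed.

Theorem lemma2p1 :
  (* (i) *)
  (forall t1 t2 : R, in_dom t1 -> in_dom t2 ->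
     - (3 * sqrt 3 / 2) <= fF t1 t2 <= 3 * sqrt 3 / 2 /\
     ((fF t1 t2 = - (3 * sqrt 3 / 2) \/ fF t1 t2 = 3 * sqrt 3 / 2)
        <-> gG t1 t2 = - (3 / 2))) /\
  (* (ii) *)
  (forall t1 t2 : R, in_dom t1 -> in_dom t2 ->
     fF t1 t1 = 0 /\ fF t1 0 = 0 /\ fF 0 t2 = 0) /\
  (forall t2 : R, 0 < t2 < 2 * PI ->
     (forall t1 : R, 0 < t1 < t2 -> fF t1 t2 > 0) /\
     (forall t1 : R, t2 < t1 < 2 * PI -> fF t1 t2 < 0)).
Proof.
  assert (HM : 0 <= 3 * sqrt 3 / 2) by (pose proof (sqrt_pos 3); lra).
  split; [|split].
  - intros t1 t2 _ _.
    rewrite <- Rsqr_eq_opp_or_eq, Rsqr_three_sqrt3_div2, fF_sqr_eq.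
    split; [|reflexivity].
    apply Rsqr_le_between; [exact HM|].
    rewrite Rsqr_three_sqrt3_div2.
    apply fF_sqr_le.
  - intros t1 t2 _ _.
    split; [apply fF_diag | split; [apply fF_t0 | apply fF_0t]].
  - intros t2 Ht2.
    split; intros t1 Ht1; [apply fF_gt0 | apply fF_lt0]; lra.
Qed.
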